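(* In the planted $k$-factor model, for every $\ell\in\{0,1,\dots,kn/2\}$ let $Z_\ell(H^*,G)$ be the number of $H\in\mathcal H$ with $|H\cap H^*|=\ell$ and $H\subseteq E(G)$. Then $$\mathbb E[Z_\ell(H^*,G)]\le (nkp)^{kn/2-\ell}.$$
   Context: Planted $k$-factor model: fix an integer $k\ge1$ and $n$ with $kn$ even. A $k$-factor on $[n]$ is a $k$-regular simple graph with vertex set $[n]$, identified with its edge set; $\mathcal H$ is the set of all $k$-factors on $[n]$. Let $p\in[0,1]$. Draw $H^*$ uniformly at random from $\mathcal H$ and, independently, $G_0\sim\mathcal G(n,p)$ (each of the $\binom n2$ vertex pairs is an edge independently with probability $p$). The observed graph is $G=G_0\cup H^*$. *)

From mathcomp Require Import all_boot all_order all_algebra.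
Set Implicit Arguments. Unset Strict Implicit. Unset Printing Implicit Defensive.
Import Order.TTheory GRing.Theory Num.Theory.
Local Open Scope ring_scope.

(* Vertex set [n] = 'I_n.  An (unordered) vertex pair / potential edge is a
   2-element subset of 'I_n.  A simple graph on [n] is identified with its
   edge set, a set of vertex pairs. *)
Definition pairs (n : nat) : {set {set 'I_n}} := [set e : {set 'I_n} | #|e| == 2%N].

Definition is_kfactor (n k : nat) (H : {set {set 'I_n}}) : bool :=
  (H \subset pairs n) && [forall v : 'I_n, #|[set e in H | v \in e]| == k].

Definition kfactors (n k : nat) : {set {set {set 'I_n}}} :=
  [set H | is_kfactor k H].

Definition gnp_weight (R : ringType) (n : nat) (p : R) (G0 : {set {set 'I_n}}) : R :=
  p ^+ #|G0| * (1 - p) ^+ (#|pairs n| - #|G0|).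

Definition Zl (n k l : nat) (Hs G : {set {set 'I_n}}) : nat :=
  #|[set H in kfactors n k | (#|H :&: Hs| == l) && (H \subset G)]|.

(* E[Z_l(H*, G)] with H* uniform on \mathcal H, G0 ~ G(n,p) independent,
   G = G0 \cup H*. *)
Definition expected_Zl (R : fieldType) (n k l : nat) (p : R) : R :=
  \sum_(Hs in kfactors n k) \sum_(G0 in powerset (pairs n))
     (#|kfactors n k|%:R)^-1 * gnp_weight p G0 * (Zl k l Hs (G0 :|: Hs))%:R.

From mathcomp Require Import all_boot all_order all_algebra.
Import Order.TTheory GRing.Theory Num.Theory.
Set Implicit Arguments. Unset Strict Implicit. Unset Printing Implicit Defensive.

(** Exchanging the sums, [E[Z_l]] is the average over [H*] of
    #{H : |H ∩ H*| = l} p^(kn/2 - l): the event [H ⊆ G0 ∪ H*] only asks the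
    kn/2 - l edges of [H \ H*] to lie in [G0]. Such an [H] is determined by
    the set [R = H* \ H] of m = kn/2 - l edges, chosen in C(kn/2, m) ways, and by
    its new edges [H \ H*], a graph with the same degrees as [R]. A graph with m
    edges and prescribed degrees contains one of at most 2m edges through a fixed
    vertex of positive degree, and removing it leaves m - 1 edges; hence there
    are at most 2^m m! such graphs, and C(kn/2, m) 2^m m! <= (kn)^m. *)

Section Graphs.
Variable T : finType.
Implicit Types (N H Hs R : {set {set T}}) (d : T -> nat) (a v : T) (e : {set T}).

Definition unordered_pairs : {set {set T}} := [set e : {set T} | #|e| == 2].

Definition deg N v := #|[set e in N | v \in e]|.

Definition graphs_with_degrees d : {set {set {set T}}} :=
  [set N : {set {set T}} | (N \subset unordered_pairs) && [forall v, deg N v == d v]].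

Lemma sum_mem_card e : \sum_v (v \in e) = #|e|.
Proof. by rewrite -sum1_card [RHS]big_mkcond; apply: eq_bigr => v _; case: (v \in e). Qed.

Lemma sum_deg N : N \subset unordered_pairs -> \sum_v deg N v = 2 * #|N|.
Proof.
move=> N_pairs; rewrite /deg.
under eq_bigr => v _ do rewrite -sum1dep_card.
rewrite (exchange_big_dep (mem N)) => [|v e _ /andP[] //] /=.
rewrite mulnC -sum_nat_const.
apply: eq_bigr => e eN; rewrite (eq_bigl (mem e)) => [|v]; last by rewrite eN.
by rewrite sum1_card; have := subsetP N_pairs e eN; rewrite inE => /eqP.
Qed.

Lemma deg_setD1 N e v : e \in N -> deg N v = (v \in e) + deg (N :\ e) v.
Proof.
move=> eN; rewrite /deg (cardsD1 e) inE eN /=; congr (_ + _).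
by apply: eq_card => f; rewrite !inE andbA.
Qed.

Lemma deg_setID N Hs v : deg N v = deg (N :&: Hs) v + deg (N :\: Hs) v.
Proof. by rewrite /deg !setIdE setIAC setIDAC cardsID. Qed.

Lemma graphs_with_degreesP N d :
  reflect (N \subset unordered_pairs /\ forall v, deg N v = d v)
          (N \in graphs_with_degrees d).
Proof.
rewrite inE; apply: (iffP andP) => [[N_pairs /forallP degN]|[N_pairs degN]].
  by split=> // v; apply/eqP.
by split=> //; apply/forallP => v; rewrite degN.
Qed.

Lemma card_graph_with_degrees N d :
  N \in graphs_with_degrees d -> 2 * #|N| = \sum_v d v.
Proof.
by case/graphs_with_degreesP => N_pairs degN; rewrite -sum_deg //; apply: eq_bigr.
Qed.

Definition positive_vertices d : {set T} := [set v | 0 < d v].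

Definition pairs_through a (S : {set T}) : {set {set T}} :=
  [set e in unordered_pairs | (a \in e) && (e \subset S)].

Lemma card_positive_vertices d : #|positive_vertices d| <= \sum_v d v.
Proof.
rewrite -sum1dep_card [X in _ <= X](bigID (fun v => 0 < d v)) /=.
by apply: leq_trans (leq_addr _ _); apply: leq_sum.
Qed.

Lemma card_pairs_through a S : #|pairs_through a S| <= #|S|.
Proof.
have inj : {in pairs_through a S &, injective (fun e => e :\ a)}.
  move=> e1 e2 /setIdP[_ /andP[a1 _]] /setIdP[_ /andP[a2 _]] eq12.
  by rewrite -(setD1K a1) -(setD1K a2) eq12.
rewrite -(card_in_imset inj) -[#|S|]bin1 -cards_draws.
apply/subset_leq_card/subsetP => _ /imsetP[e /setIdP[/[!inE] /eqP e2 /andP[ae eS]] ->].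
rewrite (subset_trans (subD1set e a) eS) /=.
by move: e2; rewrite (cardsD1 a e) ae add1n => -[->].
Qed.

Lemma card_graphs_containing d e :
  #|[set N in graphs_with_degrees d | e \in N]|
    <= #|graphs_with_degrees (fun v => d v - (v \in e))|.
Proof.
have inj : {in [set N in graphs_with_degrees d | e \in N] &, injective (fun N => N :\ e)}.
  move=> N1 N2 /setIdP[_ e1] /setIdP[_ e2] eq12.
  by rewrite -(setD1K e1) -(setD1K e2) eq12.
rewrite -(card_in_imset inj).
apply/subset_leq_card/subsetP => _ /imsetP[N + ->].
move=> /setIdP[/graphs_with_degreesP[N_pairs degN] eN].
apply/graphs_with_degreesP; split=> [|v]; first exact: subset_trans (subD1set N e) N_pairs.
by rewrite -degN (deg_setD1 v eN) addKn.
Qed.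

Lemma card_graphs_with_degrees_cover d a : 0 < d a ->
  #|graphs_with_degrees d|
    <= \sum_(e in pairs_through a (positive_vertices d))
          #|[set N in graphs_with_degrees d | e \in N]|.
Proof.
move=> da; set P := pairs_through a _.
have cover N : N \in graphs_with_degrees d -> 0 < \sum_(e in P | e \in N) 1.
  case/graphs_with_degreesP => N_pairs degN.
  have /card_gt0P[e /setIdP[eN ae]] : 0 < deg N a by rewrite degN.
  rewrite sum1dep_card; apply/card_gt0P; exists e.
  rewrite inE eN andbT; apply/setIdP; split; first exact: subsetP N_pairs e eN.
  rewrite ae; apply/subsetP => v ve.
  by rewrite inE -degN (deg_setD1 v eN) ve.
rewrite -sum1_card.
apply: (@leq_trans (\sum_(N in graphs_with_degrees d) \sum_(e in P | e \in N) 1)).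
  exact: leq_sum.
rewrite (exchange_big_dep (mem P)) => [|N e _ /andP[] //] /=.
apply: leq_sum => e eP; rewrite sum1dep_card; apply/subset_leq_card/subsetP => N.
by rewrite !inE => /andP[-> /andP[]].
Qed.

Theorem card_graphs_with_degrees m d :
  \sum_v d v = 2 * m -> #|graphs_with_degrees d| <= 2 ^ m * m`!.
Proof.
elim: m d => [|m IHm] d sum_d.
  rewrite expn0 fact0 muln1 -(cards1 (@set0 {set T})); apply/subset_leq_card/subsetP => N NG.
  rewrite inE; apply/eqP/cards0_eq.
  by have := card_graph_with_degrees NG; rewrite sum_d muln0 => /eqP; rewrite muln_eq0 => /eqP.
have : \sum_v d v != 0 by rewrite sum_d.
rewrite sum_nat_eq0 negb_forall => /existsP[a /=]; rewrite -lt0n => da.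
apply: leq_trans (card_graphs_with_degrees_cover da) _.
apply: leq_trans (_ : \sum_(e in pairs_through a (positive_vertices d)) 2 ^ m * m`! <= _).
  apply: leq_sum => e /setIdP[e_pair /andP[_ e_pos]].
  apply: leq_trans (card_graphs_containing d e) (IHm _ _).
  rewrite sumnB => [|v _]; last first.
    by case: (boolP (v \in e)) => // /(subsetP e_pos); rewrite inE.
  by move: e_pair; rewrite sum_d sum_mem_card inE => /eqP ->; rewrite mulnS addKn.
rewrite sum_nat_const factS expnS mulnACA leq_mul2r; apply/orP; right.
by apply: leq_trans (card_pairs_through _ _) _; rewrite -sum_d card_positive_vertices.
Qed.

Lemma card_graphs_missing d Hs R : Hs \in graphs_with_degrees d ->
  #|[set H in graphs_with_degrees d | Hs :\: H == R]| <= #|graphs_with_degrees (deg R)|.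
Proof.
move=> /graphs_with_degreesP[_ degHs].
have inj : {in [set H in graphs_with_degrees d | Hs :\: H == R] &,
             injective (fun H => H :\: Hs)}.
  move=> H1 H2 /setIdP[_ /eqP HR1] /setIdP[_ /eqP HR2] eq12.
  have common H : H :&: Hs = Hs :\: (Hs :\: H) by rewrite setDDr setDv set0U setIC.
  by rewrite -(setID H1 Hs) -(setID H2 Hs) !common HR1 HR2 eq12.
rewrite -(card_in_imset inj); apply/subset_leq_card/subsetP => _ /imsetP[H + ->].
move=> /setIdP[/graphs_with_degreesP[H_pairs degH] /eqP <-].
apply/graphs_with_degreesP; split=> [|v]; first exact: subset_trans (subsetDl H Hs) H_pairs.
apply: (@addnI (deg (H :&: Hs) v)).
by rewrite -deg_setID degH -degHs (deg_setID Hs H) setIC.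
Qed.

Lemma ffact_leq_expn n m : n ^_ m <= n ^ m.
Proof.
have -> : n ^ m = \prod_(i < m) n by rewrite prod_nat_const card_ord.
by rewrite ffact_prod; apply: leq_prod => i _; rewrite leq_subr.
Qed.

Lemma card_graphs_meeting d Hs l : Hs \in graphs_with_degrees d ->
  #|[set H in graphs_with_degrees d | #|H :&: Hs| == l]| <= (\sum_v d v) ^ (#|Hs| - l).
Proof.
move=> HsG; have /graphs_with_degreesP[Hs_pairs _] := HsG; set m := #|Hs| - l.
pose draws := [set R : {set {set T}} | R \subset Hs & #|R| == m].
rewrite -sum1_card (partition_big (fun H => Hs :\: H) (mem draws)) /=; last first.
  by move=> H /setIdP[_ /eqP HHs]; rewrite inE subsetDl cardsD setIC HHs eqxx.
apply: leq_trans (_ : \sum_(R in draws) 2 ^ m * m`! <= _).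
  apply: leq_sum => R /setIdP[RHs /eqP Rm]; rewrite sum1dep_card.
  apply: (@leq_trans #|[set H in graphs_with_degrees d | Hs :\: H == R]|).
    by apply/subset_leq_card/subsetP => H; rewrite !inE => /andP[/andP[-> _] ->].
  apply: leq_trans (card_graphs_missing R HsG) _.
  by apply: card_graphs_with_degrees; rewrite sum_deg ?Rm // (subset_trans RHs Hs_pairs).
rewrite sum_nat_const cards_draws mulnCA bin_ffact -(card_graph_with_degrees HsG) expnMn.
by rewrite leq_mul2l ffact_leq_expn orbT.
Qed.

End Graphs.

Local Open Scope ring_scope.

Lemma sum_powerset_prod (R : comPzSemiRingType) (S : finType) (W : {set S}) (F G : S -> R) :
  \sum_(B in powerset W) (\prod_(i in B) F i) * \prod_(i in W :\: B) G i
    = \prod_(i in W) (F i + G i).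
Proof.
pose F' i := if i \in W then F i else 0.
pose G' i := if i \in W then G i else 1.
transitivity (\prod_i (F' i + G' i)); last first.
  rewrite [RHS]big_mkcond; apply: eq_bigr => i _.
  by rewrite /F' /G'; case: (i \in W); rewrite ?add0r.
rewrite bigA_distr [RHS](bigID (mem (powerset W))) /= [X in _ + X]big1 ?addr0 => [|B].
  apply: eq_big => // B; rewrite powersetE => BW.
  rewrite [RHS](bigID (mem B)) /=; congr (_ * _).
    by apply: eq_big => // i iB; rewrite iB /F' (subsetP BW i iB).
  rewrite [RHS](eq_bigr G') => [|i /negbTE -> //].
  by rewrite /G' -big_mkcondr; apply: eq_bigl => i; rewrite !inE.
rewrite powersetE => /subsetPn[i iB iW].
by rewrite (bigD1 i) //= iB /F' (negbTE iW) mul0r.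
Qed.

Lemma sum_gnp_weight_superset (R : comNzRingType) n (p : R) (A : {set {set 'I_n}}) :
  A \subset pairs n ->
  \sum_(G0 in powerset (pairs n)) gnp_weight p G0 * (A \subset G0)%:R = p ^+ #|A|.
Proof.
move=> A_pairs; set U := pairs n.
have term G0 : G0 \in powerset U -> gnp_weight p G0 * (A \subset G0)%:R
    = \prod_(i in G0) p * \prod_(i in U :\: G0) (if i \in A then 0 else 1 - p).
  rewrite powersetE => G0U; rewrite prodr_const /gnp_weight -mulrA; congr (_ * _).
  have [AG0 | /subsetPn[i iA iG0]] := boolP (A \subset G0).
    have -> : (#|U| - #|G0|)%N = #|U :\: G0| by rewrite cardsD (setIidPr G0U).
    rewrite mulr1 -prodr_const; apply: eq_bigr => i /setDP[_ iG0].
    by rewrite (contraNF (subsetP AG0 i) iG0).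
  by rewrite mulr0 (bigD1 i) /= ?iA ?mul0r // inE iG0 (subsetP A_pairs i iA).
rewrite (eq_bigr _ term) sum_powerset_prod.
rewrite (eq_bigr (fun i => if i \in A then p else 1)) => [|i _]; last first.
  by case: (i \in A); rewrite ?addr0 // addrC subrK.
rewrite -big_mkcondr prodr_const; congr (_ ^+ _); apply: eq_card => i.
by rewrite unfold_in /=; apply/andb_idl => /(subsetP A_pairs).
Qed.

Lemma kfactorsE n k : kfactors n k = graphs_with_degrees (fun _ : 'I_n => k).
Proof. by []. Qed.

Lemma card_kfactor n k H : H \in kfactors n k -> #|H| = (k * n)./2.
Proof.
rewrite kfactorsE => /card_graph_with_degrees.
by rewrite big_const_ord iter_addn_0 => <-; rewrite mul2n doubleK.
Qed.

Lemma card_kfactors_meeting n k l Hs : Hs \in kfactors n k ->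
  (#|[set H in kfactors n k | #|H :&: Hs| == l]| <= (k * n) ^ ((k * n)./2 - l))%N.
Proof.
move=> HsK; rewrite -(card_kfactor HsK) kfactorsE.
by have := card_graphs_meeting l HsK; rewrite big_const_ord iter_addn_0.
Qed.

Lemma sum_gnp_weight_Zl (R : comNzRingType) n k l (p : R) Hs : Hs \in kfactors n k ->
  \sum_(G0 in powerset (pairs n)) gnp_weight p G0 * (Zl k l Hs (G0 :|: Hs))%:R
    = #|[set H in kfactors n k | #|H :&: Hs| == l]|%:R * p ^+ ((k * n)./2 - l).
Proof.
move=> HsK; set M := [set H in _ | _].
have Zl_sum G : (Zl k l Hs G)%:R = \sum_(H in M) (H \subset G)%:R :> R.
  rewrite /Zl -sum1dep_card natr_sum (eq_bigl (fun H => (H \in M) && (H \subset G))).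
    by rewrite big_mkcondr; apply: eq_bigr => H _; case: (H \subset G).
  by move=> H /=; rewrite [H \in M]inE andbA.
under eq_bigr => G0 _ do rewrite Zl_sum mulr_sumr.
rewrite exchange_big /= mulr_natl -sumr_const.
apply: eq_bigr => H /setIdP[HK /eqP HHs].
under eq_bigr => G0 _ do rewrite setUC -subDset.
have /graphs_with_degreesP[H_pairs _] := HK.
rewrite sum_gnp_weight_superset ?cardsD ?HHs ?(card_kfactor HK) //.
exact: subset_trans (subsetDl H Hs) H_pairs.
Qed.

Lemma expected_ZlE (R : fieldType) n k l (p : R) :
  expected_Zl n k l p = #|kfactors n k|%:R^-1 *
    \sum_(Hs in kfactors n k)
      #|[set H in kfactors n k | #|H :&: Hs| == l]|%:R * p ^+ ((k * n)./2 - l).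
Proof.
rewrite /expected_Zl mulr_sumr; apply: eq_bigr => Hs HsK.
by rewrite -sum_gnp_weight_Zl // mulr_sumr; apply: eq_bigr => G0 _; rewrite -mulrA.
Qed.

Unset Implicit Arguments.

Theorem mainTheorem12 (R : realFieldType) (n k l : nat) (p : R) :
  (1 <= k)%N -> ~~ odd (k * n) -> 0 <= p -> p <= 1 ->
  (l <= (k * n)./2)%N ->
  expected_Zl n k l p <= (n%:R * k%:R * p) ^+ ((k * n)./2 - l).
Proof.
move=> _ _ p_ge0 _ _; rewrite expected_ZlE.
set c := #|kfactors n k|; set X := (n%:R * k%:R * p) ^+ _.
have X_ge0 : 0 <= X by rewrite exprn_ge0 // !mulr_ge0 ?ler0n.
apply: le_trans (_ : c%:R^-1 * \sum_(Hs in kfactors n k) X <= _).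
  rewrite ler_wpM2l ?invr_ge0 ?ler0n //; apply: ler_sum => Hs HsK.
  rewrite /X exprMn -natrM -natrX [(n * k)%N]mulnC ler_wpM2r ?exprn_ge0 // ler_nat.
  exact: card_kfactors_meeting.
rewrite sumr_const -/c -[X *+ c]mulr_natl mulrA.
have [->|c_neq0] := eqVneq c 0%N; first by rewrite invr0 !mul0r.
by rewrite mulVf ?pnatr_eq0 // mul1r.
Qed.
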